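(* Let $L>0$, $N\ge1$, and let $x=(x_1,\dots,x_{2N})\in(\mathbb{R}_{>0})^{2N}$ satisfy the highest weight condition and $\sum_{i=1}^{2N}x_i\le L$. Run Algorithm II from $x^{(1)}=x$, and let $u$, $\mu^{(i)}$, $\nu^{(i)}$, $y^{(i)}$ and the runs of zeros be as produced there. Put $\lambda^{(i)}=\sum_{l=1}^i\mu^{(l)}$ and $$q_i=L-2\sum_{k=1}^{u}\min(\lambda^{(i)},\lambda^{(k)})\,\nu^{(k)}\qquad(1\le i\le u).$$ For $1\le i\le u$ and $1\le j\le k^{(i)}$ let $I^{(i)}_j$ be the position in $y^{(i)}$ of the first entry of the $j$th run of zeros, and $r^{(i)}_j=\sum_{l=1}^{I^{(i)}_j-1}y^{(i)}_l$. Then $0\le r^{(i)}_j\le q_i$ for all $1\le i\le u$ and $1\le j\le k^{(i)}$.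
   Context: Highest weight condition: a sequence $x_1,\dots,x_{2n}$ of nonnegative reals satisfies it if $\sum_{i=1}^k(x_{2i-1}-x_{2i})\ge0$ for all $1\le k\le n$. Algorithm II. Set $N^{(1)}=N$, $x^{(1)}=x$. Given $x^{(i)}=(x^{(i)}_1,\dots,x^{(i)}_{2N^{(i)}})$ of positive reals satisfying the highest weight condition: let $\mu^{(i)}=\min_j x^{(i)}_j$ and $y^{(i)}_j=x^{(i)}_j-\mu^{(i)}$. In the (linear, non-cyclic) array $y^{(i)}_1,\dots,y^{(i)}_{2N^{(i)}}$ consider the maximal runs of consecutive zeros (a lone zero counts as a run); say there are $k^{(i)}$ runs, numbered $1,\dots,k^{(i)}$ from left to right, with lengths $n^{(i)}_1,\dots,n^{(i)}_{k^{(i)}}$. Let $N^{(i+1)}=N^{(i)}-\sum_{j}\lceil n^{(i)}_j/2\rceil$ and $\nu^{(i)}=N^{(i)}-N^{(i+1)}$. If $N^{(i+1)}=0$, stop and set $u=i$. Otherwise form $x^{(i+1)}$ from $y^{(i)}$: (a) if a run of zeros is at the left end, delete it; (b) for every run of zeros lying between positive entries $a,b$, delete the zeros if the run length is even, and if odd delete the zeros and also replace $a,b$ by the single entry $a+b$; (c') if a run of zeros is at the right end, preceded by a positive entry $a$, delete the zeros, and if its length is odd also delete $a$. Repeat with $x^{(i+1)}$. *)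

(* Algorithm II over an arbitrary real field R
   (the statement is order-algebraic, so this is the reals or more general). *)
From HB Require Import structures.
From mathcomp Require Import all_boot all_order all_algebra.
Set Implicit Arguments. Unset Strict Implicit. Unset Printing Implicit Defensive.
Import Order.TTheory GRing.Theory Num.Theory.
Local Open Scope ring_scope.

Section AlgII.
Variable R : realFieldType.

(* Highest weight condition for x = (x_1,...,x_{2n}) (0-indexed here):
   sum_{i<k} (x_{2i} - x_{2i+1}) >= 0 for 1 <= k <= n. *)
Definition highest_weight (x : seq R) : Prop :=
  forall k : nat, (1 <= k <= (size x)./2)%N ->
    0 <= \sum_(i < k) (x`_(2 * i) - x`_(2 * i).+1).

Definition seqmin (x : seq R) : R := foldr Order.min (head 0 x) x.

Definition shiftmin (x : seq R) : seq R := [seq a - seqmin x | a <- x].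

(* Tokenisation of y: inl a = a nonzero entry a, inr m = maximal run of m zeros *)
Fixpoint tok (y : seq R) : seq (R + nat) :=
  match y with
  | [::] => [::]
  | a :: y' =>
      if a == 0 then
        match tok y' with
        | inr m :: t => inr m.+1 :: t
        | t => inr 1%N :: t
        end
      else inl a :: tok y'
  end.

(* (0-based start position, length) of each maximal run of zeros, left to right *)
Fixpoint runs_from (p : nat) (t : seq (R + nat)) : seq (nat * nat) :=
  match t with
  | [::] => [::]
  | inl _ :: t' => runs_from p.+1 t'
  | inr m :: t' => (p, m) :: runs_from (p + m)%N t'
  end.

Definition zero_runs (y : seq R) : seq (nat * nat) := runs_from 0 (tok y).

Definition nu_of (y : seq R) : nat :=
  sumn [seq uphalf r.2 | r <- zero_runs y].

(* Rebuild x^{(i+1)} from the tokens following a positive entry [cur]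
   (cur is the last output entry, still subject to merging / deletion):
   (b) interior run: even -> delete zeros; odd -> delete zeros and merge a,b into a+b;
   (c') right-end run: delete zeros, and if odd also delete the preceding a. *)
Fixpoint rebuild (cur : R) (t : seq (R + nat)) : seq R :=
  match t with
  | [::] => [:: cur]
  | inl b :: t' => cur :: rebuild b t'
  | inr m :: t' =>
      match t' with
      | [::] => if odd m then [::] else [:: cur]
      | inl b :: t'' => if odd m then rebuild (cur + b) t'' else cur :: rebuild b t''
      | inr _ :: _ => rebuild cur t'   (* impossible: runs are maximal *)
      end
  end.

(* (a) a run at the left end is deleted *)
Definition next_x (y : seq R) : seq R :=
  match tok y with
  | [::] => [::]
  | inl a :: t => rebuild a t
  | inr _ :: t =>
      match t with
      | inl a :: t' => rebuild a t'
      | _ => [::]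
      end
  end.

Definition algII_step (s : seq R * nat) : seq R * nat :=
  let y := shiftmin s.1 in (next_x y, (s.2 - nu_of y)%N).

(* state number i (1-based): (x^{(i)}, N^{(i)}) *)
Definition algII_state (x : seq R) (N i : nat) : seq R * nat :=
  iter i.-1 algII_step (x, N).

Definition algII_x (x : seq R) (N i : nat) : seq R := (algII_state x N i).1.
Definition algII_N (x : seq R) (N i : nat) : nat := (algII_state x N i).2.
Definition algII_mu (x : seq R) (N i : nat) : R := seqmin (algII_x x N i).
Definition algII_y (x : seq R) (N i : nat) : seq R := shiftmin (algII_x x N i).
Definition algII_nu (x : seq R) (N i : nat) : nat :=
  (algII_N x N i - algII_N x N i.+1)%N.
Definition algII_lambda (x : seq R) (N i : nat) : R :=
  \sum_(1 <= l < i.+1) algII_mu x N l.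
Definition algII_q (x : seq R) (N u : nat) (L : R) (i : nat) : R :=
  L - 2 * \sum_(1 <= k < u.+1)
            Order.min (algII_lambda x N i) (algII_lambda x N k) * (algII_nu x N k)%:R.

End AlgII.

From HB Require Import structures.
From mathcomp Require Import all_boot all_order all_algebra.
From mathcomp Require Import zify ring.
Set Implicit Arguments. Unset Strict Implicit. Unset Printing Implicit Defensive.
Import Order.TTheory GRing.Theory Num.Theory.
Local Open Scope ring_scope.

(* Since y^{(i)} has nonnegative entries, 0 <= r^{(i)}_j <= sum(y^{(i)}), so it
   suffices to show  sum(y^{(i)}) <= L - 2 sum_{l<=i} mu^{(l)} N^{(l)} <= q_i.

   - One step of the algorithm (passing from y to the next x) never increases
     the total mass, and deletes at most 2 nu entries, where nu is the sum of
     ceil(n_j/2) over the runs of zeros.  This is proved on the token list of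
     y (positive entries and maximal runs of zeros), on which the rebuilding
     procedure is a simple recursion.
   - Consequently the invariants  size x^{(i)} >= 2 N^{(i)}  and
     sum(x^{(i)}) <= L - 2 sum_{l<i} mu^{(l)} N^{(l)}  hold along the run, and
     subtracting the minimum mu^{(i)} from the 2N^{(i)} (or more) entries of
     x^{(i)} gives the bound on sum(y^{(i)}).
   - Finally, an Abel summation (telescoping nu^{(k)} = N^{(k)} - N^{(k+1)}
     with N^{(u+1)} = 0) shows
     sum_k min(lambda^{(i)}, lambda^{(k)}) nu^{(k)} <= sum_{l<=i} mu^{(l)} N^{(l)}. *)

Section Tokens.
Variable R : realFieldType.
Implicit Types (y : seq R) (t : seq (R + nat)) (cur : R).

Fixpoint tsize t : nat :=
  match t with
  | [::] => 0
  | inl _ :: t' => (tsize t').+1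
  | inr m :: t' => m + tsize t'
  end.

Fixpoint tsum t : R :=
  match t with
  | [::] => 0
  | inl a :: t' => a + tsum t'
  | inr _ :: t' => tsum t'
  end.

Fixpoint tnu t : nat :=
  match t with
  | [::] => 0
  | inl _ :: t' => tnu t'
  | inr m :: t' => uphalf m + tnu t'
  end.

Definition tnonneg t : bool := all (fun z => if z is inl a then 0 <= a else true) t.

Lemma tok_size y : tsize (tok y) = size y.
Proof.
elim: y => [|a y IH] //=; case: eqP => _ //=; last by rewrite IH.
by move: IH; case: (tok y) => [|[b|m] t] /= <-.
Qed.

Lemma tok_sum y : tsum (tok y) = \sum_(a <- y) a.
Proof.
elim: y => [|a y IH] /=; first by rewrite big_nil.
rewrite big_cons; case: eqP => [->|_] /=; last by rewrite IH.
rewrite add0r -IH.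
by case: (tok y) => [|[b|m] t].
Qed.

Lemma tok_nonneg y : all (fun a => 0 <= a) y -> tnonneg (tok y).
Proof.
elim: y => [|a y IH] //= /andP [a_ge0 /IH].
case: eqP => _; last by rewrite /tnonneg /= a_ge0.
by case: (tok y) => [|[b|m] t].
Qed.

Lemma tok_not_two_runs y m m' t : tok y <> inr m :: inr m' :: t.
Proof.
elim: y m m' t => [|a y IH] m m' t //=; case: eqP => _ //.
case E: (tok y) => [|[b|k] t'] //= [_ Et]; move: E; rewrite Et.
exact: IH.
Qed.

Lemma zero_runs_nu y : nu_of y = tnu (tok y).
Proof.
rewrite /nu_of /zero_runs; elim: (tok y) 0%N => [|[a|m] t IH] p //=.
by rewrite IH.
Qed.

(* The induction is on
   the length of t, since a merge consumes two tokens at once. *)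
Lemma rebuild_spec t cur : 0 <= cur -> tnonneg t ->
  [/\ all (fun a => 0 <= a) (rebuild cur t),
      \sum_(a <- rebuild cur t) a <= cur + tsum t
    & ((tsize t).+1 <= size (rebuild cur t) + (tnu t).*2)%N].
Proof.
have [n] := ubnP (size t); elim: n => // n IH in t cur *.
case: t => [|[b|m] t] /= lt_t cur_ge0 t_ge0.
- by rewrite cur_ge0 big_seq1 addr0.
- move: t_ge0 => /andP [b_ge0 t_ge0].
  have [ge0 sum_le size_ge] := IH t b lt_t b_ge0 t_ge0.
  by rewrite cur_ge0 ge0 big_cons lerD2l sum_le; split.
case: t lt_t t_ge0 => [|[b|m'] t] lt_t t_ge0.
- case: ifP => m_odd /=; rewrite ?big_nil ?big_seq1 ?cur_ge0 !addr0; split => //.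
  + by have := odd_uphalfK m_odd; lia.
  + by have := even_uphalfK (negbT m_odd); lia.
- move: t_ge0 => /andP [b_ge0 t_ge0]; case: ifP => m_odd.
  + have [ge0 sum_le size_ge] :=
      IH t (cur + b) (ltnW lt_t) (addr_ge0 cur_ge0 b_ge0) t_ge0.
    rewrite ge0 addrA; split => //.
    by have := odd_uphalfK m_odd; rewrite /=; lia.
  + have [ge0 sum_le size_ge] := IH t b (ltnW lt_t) b_ge0 t_ge0.
    rewrite /= cur_ge0 ge0 big_cons lerD2l sum_le; split => //.
    by have := even_uphalfK (negbT m_odd); rewrite /=; lia.
- have [ge0 sum_le size_ge] := IH (inr m' :: t) cur lt_t cur_ge0 t_ge0.
  rewrite ge0; split => //; have := uphalfK m; move: size_ge => /=; lia.
Qed.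

Lemma next_x_spec y : all (fun a => 0 <= a) y ->
  [/\ all (fun a => 0 <= a) (next_x y),
      \sum_(a <- next_x y) a <= \sum_(a <- y) a
    & (size y <= size (next_x y) + (nu_of y).*2)%N].
Proof.
move=> y_ge0; rewrite /next_x zero_runs_nu -(tok_size y) -(tok_sum y).
move: (tok_nonneg y_ge0) (@tok_not_two_runs y).
case: (tok y) => [|[a|m] t] /=; first by rewrite big_nil.
- move=> /andP [a_ge0 t_ge0] _.
  by have [ge0 sum_le size_ge] := rebuild_spec a_ge0 t_ge0.
case: t => [|[a|m'] t] /= t_ge0 no_two; last by case: (no_two m m' t).
- by rewrite big_nil; split => //; have := uphalfK m; lia.
move: t_ge0 => /andP [a_ge0 t_ge0].
have [ge0 sum_le size_ge] := rebuild_spec a_ge0 t_ge0.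
by split => //; have := uphalfK m; lia.
Qed.
End Tokens.

Section AbelSummation.
Variable R : realFieldType.
Implicit Types (mu : nat -> R) (c : nat -> nat).

(* min(Lambda_i, Lambda_k) <= Lambda_{min(i,k)}, written as a sum over l <= i. *)
Lemma min_prefix_sums_le mu i k :
  Order.min (\sum_(1 <= l < i.+1) mu l) (\sum_(1 <= l < k.+1) mu l)
  <= \sum_(1 <= l < i.+1) (if (l <= k)%N then mu l else 0).
Proof.
set T := \sum_(1 <= l < i.+1) (if _ then _ else _).
case: (leqP i k) => [le_ik | lt_ki].
  have -> : T = \sum_(1 <= l < i.+1) mu l.
    by apply: eq_big_nat => l /andP [_ lt_li]; rewrite (leq_trans (ltnSE lt_li) le_ik).
  by rewrite ge_min lexx.
have -> : T = \sum_(1 <= l < k.+1) mu l.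
  rewrite /T (big_cat_nat _ (n := k.+1)) //=; last exact: ltnW.
  rewrite [X in _ + X]big_nat_cond [X in _ + X]big1 => [|l /andP [/andP [lt_kl _] _]].
    by rewrite addr0; apply: eq_big_nat => l /andP [_ lt_lk]; rewrite ltnSE.
  by rewrite leqNgt lt_kl.
by rewrite ge_min lexx orbT.
Qed.

Lemma tail_sum_increments c u l : (forall k, c k.+1 <= c k)%N -> c u.+1 = 0%N ->
  (1 <= l <= u.+1)%N ->
  \sum_(1 <= k < u.+1) (if (l <= k)%N then (c k - c k.+1)%N%:R else 0) = (c l)%:R :> R.
Proof.
move=> c_mono c_end /andP [l_ge1 le_lu].
rewrite (big_cat_nat _ (n := l)) //= big_nat_cond big1 => [|k /andP [/andP [_ lt_kl] _]]; last first.
  by rewrite leqNgt lt_kl.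
rewrite add0r (telescope_sumr_eq (fun k => - (c k)%:R)) // => [|k /andP [le_lk _]].
  by rewrite c_end; ring.
by rewrite le_lk natrB //; ring.
Qed.

Lemma abel_min_sum_le mu c u i : (forall k, c k.+1 <= c k)%N -> c u.+1 = 0%N ->
  (i <= u)%N ->
  \sum_(1 <= k < u.+1) Order.min (\sum_(1 <= l < i.+1) mu l) (\sum_(1 <= l < k.+1) mu l)
                       * (c k - c k.+1)%N%:R
  <= \sum_(1 <= l < i.+1) mu l * (c l)%:R.
Proof.
move=> c_mono c_end le_iu.
have swap : \sum_(1 <= k < u.+1) (\sum_(1 <= l < i.+1) (if (l <= k)%N then mu l else 0))
                                 * (c k - c k.+1)%N%:R
          = \sum_(1 <= l < i.+1) mu l * (c l)%:R.
  under eq_bigr do rewrite mulr_suml.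
  rewrite exchange_big /=; apply: eq_big_nat => l /andP [l_ge1 lt_li].
  rewrite -(@tail_sum_increments c u l c_mono c_end); last by rewrite l_ge1 /=; lia.
  by rewrite mulr_sumr; apply: eq_bigr => k _; case: ifP; rewrite ?mul0r ?mulr0.
rewrite -swap; apply: ler_sum => k _; apply: ler_wpM2r => //.
exact: min_prefix_sums_le.
Qed.
End AbelSummation.

Section Sequences.
Variable R : realFieldType.
Implicit Types (x y : seq R).

Lemma seqmin_le x a : a \in x -> seqmin x <= a.
Proof.
rewrite /seqmin; elim: x (head 0 x) => [|b x IH] d //=.
by rewrite inE ge_min => /orP [/eqP ->|/IH ->]; rewrite ?lexx ?orbT.
Qed.

Lemma seqmin_ge0 x : all (fun a => 0 <= a) x -> 0 <= seqmin x.
Proof.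
rewrite /seqmin; case: x => [|b x] //= /andP [b_ge0 x_ge0].
rewrite le_min b_ge0 /=; elim: x x_ge0 => [|a x IH] //= /andP [a_ge0 /IH].
by rewrite le_min a_ge0.
Qed.

Lemma shiftmin_ge0 x : all (fun a => 0 <= a) (shiftmin x).
Proof. by apply/allP => b /mapP [a a_in ->]; rewrite subr_ge0 seqmin_le. Qed.

Lemma sum_shiftmin x : \sum_(a <- shiftmin x) a = \sum_(a <- x) a - (size x)%:R * seqmin x.
Proof.
rewrite /shiftmin big_map sumrB; congr (_ - _).
by rewrite big_const_seq count_predT iter_addr addr0 mulr_natl.
Qed.

Lemma sum_shiftmin_le x n : all (fun a => 0 <= a) x -> (2 * n <= size x)%N ->
  \sum_(a <- shiftmin x) a <= \sum_(a <- x) a - 2 * (seqmin x * n%:R).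
Proof.
move=> x_ge0 le_nx; rewrite sum_shiftmin lerD2l lerN2 mulrCA [leRHS]mulrC -natrM.
by rewrite ler_wpM2l ?seqmin_ge0 // ler_nat.
Qed.

Lemma prefix_sum_le y p : all (fun a => 0 <= a) y ->
  0 <= \sum_(l < p) y`_l <= \sum_(a <- y) a.
Proof.
elim: y p => [|b y IH] p.
  by move=> _; rewrite big_nil big1 ?lexx // => l _; rewrite nth_nil.
move=> /= /andP [b_ge0 y_ge0]; rewrite big_cons.
case: p => [|p].
  have /andP [_ sum_ge0] := IH 0%N y_ge0.
  by rewrite big_ord0 lexx addr_ge0 // (le_trans _ sum_ge0) ?big_ord0.
have /andP [pre_ge0 pre_le] := IH p y_ge0.
by rewrite big_ord_recl /= addr_ge0 //= lerD2l.
Qed.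
End Sequences.

Section AlgorithmII.
Variables (R : realFieldType) (x : seq R) (N : nat) (L : R).
Hypotheses (x_pos : all (fun a => 0 < a) x) (size_x : size x = (2 * N)%N)
  (sum_x : \sum_(a <- x) a <= L).

Lemma algII_x_succ n : algII_x x N n.+2 = next_x (algII_y x N n.+1).
Proof. by []. Qed.

Lemma algII_N_succ n :
  algII_N x N n.+2 = (algII_N x N n.+1 - nu_of (algII_y x N n.+1))%N.
Proof. by []. Qed.

(* N^{(k)} is nonincreasing, so nu^{(k)} = N^{(k)} - N^{(k+1)} exactly. *)
Lemma algII_N_nonincr k : (algII_N x N k.+1 <= algII_N x N k)%N.
Proof. by case: k => [|k] //; rewrite /algII_N /algII_state /= leq_subr. Qed.

(* Remaining mass after n steps:  L - 2 sum_{l <= n} mu^{(l)} N^{(l)}. *)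
Definition budget (n : nat) : R :=
  L - 2 * \sum_(1 <= l < n.+1) algII_mu x N l * (algII_N x N l)%:R.

Lemma budget_step n :
  budget n.+1 = budget n - 2 * (algII_mu x N n.+1 * (algII_N x N n.+1)%:R).
Proof. by rewrite /budget big_nat_recr //= mulrDr opprD addrA. Qed.

Lemma state_invariant n :
  [/\ all (fun a => 0 <= a) (algII_x x N n.+1),
      (2 * algII_N x N n.+1 <= size (algII_x x N n.+1))%N
    & \sum_(a <- algII_x x N n.+1) a <= budget n].
Proof.
elim: n => [|n [x_ge0 size_ge sum_le]].
  rewrite /budget big_geq // mulr0 subr0 size_x; split => //.
  by apply/allP => a /(allP x_pos)/ltW.
have y_sum := sum_shiftmin_le x_ge0 size_ge.
have [next_ge0 next_sum next_size] := next_x_spec (shiftmin_ge0 (algII_x x N n.+1)).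
rewrite algII_x_succ algII_N_succ /algII_y; split => //.
- move: next_size size_ge; rewrite size_map.
  move: (size _) (size (next_x _)) (nu_of _) (algII_N _ _ _) => sx sy nu n_x; lia.
- rewrite budget_step (le_trans next_sum) // (le_trans y_sum) //.
  by rewrite lerD2r.
Qed.

Lemma shifted_sum_le_budget n : \sum_(a <- algII_y x N n.+1) a <= budget n.+1.
Proof.
have [x_ge0 size_ge sum_le] := state_invariant n.
rewrite budget_step (le_trans (sum_shiftmin_le x_ge0 size_ge)) //.
by rewrite lerD2r.
Qed.
End AlgorithmII.

Theorem mainTheorem10 (R : realFieldType) (L : R) (N : nat) (x : seq R) (u : nat) :
  0 < L -> (1 <= N)%N ->
  size x = (2 * N)%N ->
  all (fun a => 0 < a) x ->
  highest_weight x ->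
  \sum_(a <- x) a <= L ->
  (* u is the stopping index of Algorithm II: the first i >= 1 with N^{(i+1)} = 0 *)
  (1 <= u)%N ->
  algII_N x N u.+1 = 0%N ->
  (forall i, (1 <= i < u)%N -> algII_N x N i.+1 <> 0%N) ->
  forall i j, (1 <= i <= u)%N -> (j < size (zero_runs (algII_y x N i)))%N ->
    let y := algII_y x N i in
    let r := \sum_(l < (nth (0, 0) (zero_runs y) j).1) y`_l in
    0 <= r <= algII_q x N u L i.
Proof.
move=> _ _ size_x x_pos _ sum_x _ N_end _ i j /andP [i_ge1 le_iu] _.
case: i i_ge1 le_iu => [//|n] _ le_nu; set y := algII_y x N n.+1.
have /andP [r_ge0 r_le_y] :=
  prefix_sum_le (nth (0, 0) (zero_runs y) j).1 (shiftmin_ge0 (algII_x x N n.+1)).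
have y_le_budget := shifted_sum_le_budget x_pos size_x sum_x n.
have budget_le_q : budget x N L n.+1 <= algII_q x N u L n.+1.
  rewrite /budget /algII_q lerD2l lerN2 ler_pM2l //.
  exact: abel_min_sum_le (@algII_N_nonincr _ x N) N_end le_nu.
apply/andP; split => //.
by rewrite (le_trans r_le_y) // (le_trans y_le_budget).
Qed.
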